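(* Let $\mathcal B$ be a bilinear form on $\mathbb C[z]$, let $s^*,s^\dagger\in\mathbb C$, and define bilinear forms $\mathcal B^*,\mathcal B^\dagger$ on $\mathbb C[z]$ by $\mathcal B^*[z^i,z^j]:=\mathcal B[(z-s^* )z^i,z^j]$ and $\mathcal B^\dagger[z^i,z^j]:=\mathcal B[z^i,(z-s^\dagger)z^j]$ for all $i,j\ge0$. Let $\tau_0:=1$, $\tau_n:=\det(\mathcal B[z^i,z^j])_{i,j=0}^{n-1}$ ($n\ge1$), assumed nonzero. Suppose that $\{\phi_n\},\{\psi_n\}$; $\{\phi^*_n\},\{\psi^*_n\}$; and $\{\phi^\dagger_n\},\{\psi^\dagger_n\}$ (indexed by $n\ge0$) are the pairs of monic biorthogonal polynomial sequences with respect to $\mathcal B$, $\mathcal B^*$ and $\mathcal B^\dagger$ respectively, and that $\phi_n(s^* )\neq0$ and $\psi_n(s^\dagger)\neq0$ for all $n\ge0$. Then for all $n\ge0$: \begin{align*} (z-s^* )\phi^*_n(z)&=\phi_{n+1}(z)+q^*_n\phi_n(z), & q^*_n&=-\frac{\phi_{n+1}(s^* )}{\phi_n(s^* )},\\ \phi_{n+1}(z)&=\phi^\dagger_{n+1}(z)+e^\dagger_n\phi^\dagger_n(z), & e^\dagger_n&=\frac{\tau_n\tau_{n+2}}{q^\dagger_n\tau_{n+1}^2},\\ (z-s^\dagger)\psi^\dagger_n(z)&=\psi_{n+1}(z)+q^\dagger_n\psi_n(z), & q^\dagger_n&=-\frac{\psi_{n+1}(s^\dagger)}{\psi_n(s^\dagger)},\\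 \psi_{n+1}(z)&=\psi^*_{n+1}(z)+e^*_n\psi^*_n(z), & e^*_n&=\frac{\tau_n\tau_{n+2}}{q^*_n\tau_{n+1}^2}. \end{align*}
   Context: For a bilinear form $\mathcal C$ on $\mathbb C[z]$, a pair of monic biorthogonal polynomial sequences $\{\phi_n\}_{n\ge0},\{\psi_n\}_{n\ge0}$ with respect to $\mathcal C$ means: $\deg\phi_n=\deg\psi_n=n$, $\phi_n$ and $\psi_n$ are monic, and $\mathcal C[\phi_m,\psi_n]=h_n\delta_{m,n}$ with $h_n\neq0$ for all $m,n\ge0$ ($\delta$ the Kronecker delta). *)

From mathcomp Require Import all_boot all_algebra.
From mathcomp Require Import complex.
From mathcomp Require Import Rstruct.
Set Implicit Arguments.
Unset Strict Implicit.
Unset Printing Implicit Defensive.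
Import GRing.Theory.
Local Open Scope ring_scope.

Definition C : fieldType := (Rdefinitions.R)[i].

Definition bilinear_form (B : {poly C} -> {poly C} -> C) : Prop :=
  (forall (a : C) (p q r : {poly C}), B (a *: p + q) r = a * B p r + B q r) /\
  (forall (a : C) (p q r : {poly C}), B r (a *: p + q) = a * B r p + B r q).

Definition monic_biorthogonal (B : {poly C} -> {poly C} -> C)
    (phi psi : nat -> {poly C}) : Prop :=
  (forall n : nat, size (phi n) = n.+1 /\ size (psi n) = n.+1 /\
                   phi n \is monic /\ psi n \is monic) /\
  exists h : nat -> C, (forall n : nat, h n != 0) /\
    (forall m n : nat, B (phi m) (psi n) = h n * (m == n)%:R).

(* tau_n = det (B[z^i, z^j])_{i,j=0}^{n-1}; tau_0 = 1 (empty determinant). *)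
Definition tau (B : {poly C} -> {poly C} -> C) (n : nat) : C :=
  \det (\matrix_(i < n, j < n) B 'X^i 'X^j).

From mathcomp Require Import all_boot all_algebra.
From mathcomp Require Import complex.
From mathcomp Require Import Rstruct.
From mathcomp Require Import ring.
Import GRing.Theory.
Local Open Scope ring_scope.

Set Implicit Arguments.
Unset Strict Implicit.

(* (z - sstar) phis_n is monic of degree n+1 and B-orthogonal to psi_0, ...,
   psi_(n-1), so it differs from phi_(n+1) by a multiple of phi_n; evaluating
   at sstar gives that multiple.  Likewise phi_(n+1) - phid_(n+1) has degree
   at most n and is orthogonal, for the form B[p, (z - sdag) q], to psid_0,
   ..., psid_(n-1), so it is a multiple of phid_n; pairing it with
   (z - sdag) psid_n and using the recurrence for psid gives the multiple
   h_(n+1) / (qd_n h_n), where h_n = B[phi_n, psi_n].  The Gram matrix of B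
   is carried by the unitriangular coefficient matrices of phi and psi to
   diag(h), so tau_n = h_0 ... h_(n-1) and
   h_(n+1) / h_n = tau_n tau_(n+2) / tau_(n+1)^2.  The psi-identities are the
   phi-identities for the transposed form. *)

Definition monic_basis (R : nzRingType) (b : nat -> {poly R}) : Prop :=
  forall n : nat, size (b n) = n.+1 /\ b n \is monic.

Section MonicBasis.
Variable R : nzRingType.
Implicit Types p q : {poly R}.

Lemma size_XsubCM (s : R) p : p != 0 -> size (('X - s%:P) * p) = (size p).+1.
Proof. by move=> p_neq0; rewrite size_monicM ?monicXsubC ?size_XsubC. Qed.

Lemma size_subZ_coef q p n :
  (size q <= n.+1)%N -> size p = n.+1 -> p \is monic ->
  (size (q - q`_n *: p)%R <= n)%N.
Proof.
move=> /leq_sizeP q_small p_size /monicP p_lead; apply/leq_sizeP => j.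
rewrite leq_eqVlt coefB coefZ => /predU1P[<- | n_lt_j].
  by move: p_lead; rewrite lead_coefE p_size => ->; rewrite mulr1 subrr.
have /leq_sizeP p_small : (size p <= n.+1)%N by rewrite p_size.
by rewrite q_small // p_small // mulr0 subr0.
Qed.

Lemma size_sub_monic q p n :
  size q = n.+1 -> size p = n.+1 -> q \is monic -> p \is monic ->
  (size (q - p)%R <= n)%N.
Proof.
move=> q_size p_size /monicP q_lead p_monic.
have q_n : q`_n = 1 by move: q_lead; rewrite lead_coefE q_size.
by rewrite -[p in (q - p)%R]scale1r -q_n size_subZ_coef ?q_size.
Qed.

Variable b : nat -> {poly R}.
Hypothesis b_basis : monic_basis b.

Lemma monic_basis_ind (P : {poly R} -> Prop) n :
  P 0 -> (forall k a q, (k < n)%N -> P q -> P (a *: b k + q)) ->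
  forall q, (size q <= n)%N -> P q.
Proof.
move=> P0; elim: n => [|n IHn] Pstep q.
  by rewrite leqn0 size_poly_eq0 => /eqP ->.
move=> q_size; rewrite -(subrK (q`_n *: b n) q) addrC.
apply: (Pstep) => //; apply: IHn => [k a r k_lt_n|].
  by apply: Pstep; apply: leqW.
by case: (b_basis n) => b_size b_monic; apply: size_subZ_coef.
Qed.

End MonicBasis.

Lemma det_monic_basis_coef (R : comNzRingType) (b : nat -> {poly R}) m :
  monic_basis b -> \det (\matrix_(i < m, j < m) (b i)`_j) = 1.
Proof.
move=> b_basis; rewrite det_trig.
  apply: big1 => i _; rewrite mxE.
  by case: (b_basis i) => b_size /monicP; rewrite lead_coefE b_size.
apply/is_trig_mxP => i j i_lt_j; rewrite mxE.
case: (b_basis i) => b_size _.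
by have /leq_sizeP -> // : (size (b i) <= j)%N by rewrite b_size.
Qed.

Section BilinearForm.
Variable B : {poly C} -> {poly C} -> C.
Hypothesis B_bilinear : bilinear_form B.
Implicit Types p q r : {poly C}.

Lemma formDl p q r : B (p + q) r = B p r + B q r.
Proof. by have := B_bilinear.1 1 p q r; rewrite scale1r mul1r. Qed.

Lemma formDr r p q : B r (p + q) = B r p + B r q.
Proof. by have := B_bilinear.2 1 p q r; rewrite scale1r mul1r. Qed.

Lemma form0l r : B 0 r = 0.
Proof. by apply: (@addrI _ (B 0 r)); rewrite -formDl !addr0. Qed.

Lemma form0r r : B r 0 = 0.
Proof. by apply: (@addrI _ (B r 0)); rewrite -formDr !addr0. Qed.

Lemma formZl a p r : B (a *: p) r = a * B p r.
Proof. by have := B_bilinear.1 a p 0 r; rewrite !addr0 form0l addr0. Qed.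

Lemma formZr a p r : B r (a *: p) = a * B r p.
Proof. by have := B_bilinear.2 a p 0 r; rewrite !addr0 form0r addr0. Qed.

Lemma formBl p q r : B (p - q) r = B p r - B q r.
Proof. by rewrite -scaleN1r formDl formZl mulN1r. Qed.

Lemma form_expand p q m : (size p <= m)%N -> (size q <= m)%N ->
  B p q = \sum_(l < m) (\sum_(k < m) p`_k * B 'X^k 'X^l) * q`_l.
Proof.
move=> p_size q_size.
rewrite -{1}(take_poly_id q_size) /take_poly poly_def.
rewrite (big_morph (B p) (formDr p) (form0r p)); apply: eq_bigr => l _.
rewrite formZr mulrC -{1}(take_poly_id p_size) /take_poly poly_def.
rewrite (big_morph (B^~ 'X^l) (fun p q => formDl p q 'X^l) (form0l 'X^l)).
by congr (_ * _); apply: eq_bigr => k _; rewrite formZl.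
Qed.

End BilinearForm.

Lemma bilinear_form_tr B :
  bilinear_form B -> bilinear_form (fun p q => B q p).
Proof.
by case=> linl linr; split=> a p q r /=; [rewrite linr | rewrite linl].
Qed.

Lemma bilinear_form_mulXsubCl B (s : C) :
  bilinear_form B -> bilinear_form (fun p q => B (('X - s%:P) * p) q).
Proof.
case=> linl linr; split=> a p q r /=; last by rewrite linr.
by rewrite mulrDr -scalerAr linl.
Qed.

Lemma bilinear_form_mulXsubCr B (s : C) :
  bilinear_form B -> bilinear_form (fun p q => B p (('X - s%:P) * q)).
Proof.
case=> linl linr; split=> a p q r /=; first by rewrite linl.
by rewrite mulrDr -scalerAr linr.
Qed.

Lemma monic_biorthogonal_tr B phi psi :
  monic_biorthogonal B phi psi ->
  monic_biorthogonal (fun p q => B q p) psi phi.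
Proof.
case=> bases [h [h_neq0 Bh]]; split.
  by move=> n; case: (bases n) => ? [? [? ?]].
exists h; split => // m n /=; rewrite Bh.
by case: (eqVneq m n) => [->|_]; rewrite ?mulr0.
Qed.

Section Biorthogonal.
Variable B : {poly C} -> {poly C} -> C.
Hypothesis B_bilinear : bilinear_form B.
Variables phi psi : nat -> {poly C}.
Hypothesis biorth : monic_biorthogonal B phi psi.
Implicit Types q x : {poly C}.

Lemma biorth_basisl : monic_basis phi.
Proof. by move=> n; case: (biorth.1 n) => ? [? [? ?]]. Qed.

Lemma biorth_basisr : monic_basis psi.
Proof. by move=> n; case: (biorth.1 n) => ? [? [? ?]]. Qed.

Lemma biorth_offdiag m n : m != n -> B (phi m) (psi n) = 0.
Proof. by case: biorth => _ [h [_ ->]] /negbTE ->; rewrite mulr0. Qed.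

Lemma biorth_diag_neq0 n : B (phi n) (psi n) != 0.
Proof. by case: biorth => _ [h [h_neq0 ->]]; rewrite eqxx mulr1. Qed.

Lemma biorth_orthl n q : (size q <= n)%N -> B (phi n) q = 0.
Proof.
move: q; apply: (monic_basis_ind biorth_basisr (P := fun q => B (phi n) q = 0)).
  exact: form0r.
move=> k a r k_lt_n r_orth.
by rewrite B_bilinear.2 r_orth biorth_offdiag ?mulr0 ?addr0 // gtn_eqF.
Qed.

Lemma biorth_orthr n q : (size q <= n)%N -> B q (psi n) = 0.
Proof.
move: q; apply: (monic_basis_ind biorth_basisl (P := fun q => B q (psi n) = 0)).
  exact: form0l.
move=> k a r k_lt_n r_orth.
by rewrite B_bilinear.1 r_orth biorth_offdiag ?mulr0 ?addr0 // ltn_eqF.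
Qed.

Lemma biorth_eq0 n x : (size x <= n)%N ->
  (forall k, (k < n)%N -> B x (psi k) = 0) -> x = 0.
Proof.
elim: n x => [|n IHn] x x_size x_orth.
  by move: x_size; rewrite leqn0 size_poly_eq0 => /eqP.
have [phi_size phi_monic] := biorth_basisl n.
have x_coll : x = x`_n *: phi n.
  apply/eqP; rewrite -subr_eq0; apply/eqP/IHn; first exact: size_subZ_coef.
  move=> k k_lt_n; rewrite formBl // formZl // (x_orth k (ltnW k_lt_n)).
  by rewrite biorth_offdiag ?mulr0 ?subr0 // gtn_eqF.
have /eqP := x_orth n (ltnSn n).
rewrite {1}x_coll formZl // mulf_eq0 (negbTE (biorth_diag_neq0 n)) orbF.
by move=> /eqP x_n0; rewrite x_coll x_n0 scale0r.
Qed.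

Lemma biorth_collinear n x : (size x <= n.+1)%N ->
  (forall k, (k < n)%N -> B x (psi k) = 0) -> x = x`_n *: phi n.
Proof.
have [phi_size phi_monic] := biorth_basisl n.
move=> x_size x_orth; apply/eqP; rewrite -subr_eq0; apply/eqP.
apply: (biorth_eq0 (n := n)); first exact: size_subZ_coef.
move=> k k_lt_n; rewrite formBl // formZl // x_orth //.
by rewrite biorth_offdiag ?mulr0 ?subr0 // gtn_eqF.
Qed.

Lemma tau_biorth m : tau B m = \prod_(k < m) B (phi k) (psi k).
Proof.
pose coef_mx b := \matrix_(i < m, j < m) (b i : {poly C})`_j.
have LGU : coef_mx phi *m \matrix_(i < m, j < m) B 'X^i 'X^j *m (coef_mx psi)^T
           = \matrix_(i < m, j < m) B (phi i) (psi j).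
  apply/matrixP => i j; rewrite mxE [RHS]mxE (form_expand B_bilinear (m := m)).
  - apply: eq_bigr => l _; rewrite !mxE; congr (_ * _).
    by apply: eq_bigr => k _; rewrite !mxE.
  - by rewrite (biorth_basisl i).1.
  - by rewrite (biorth_basisr j).1.
move/(congr1 determinant): LGU.
rewrite !det_mulmx det_tr (det_monic_basis_coef m biorth_basisl).
rewrite (det_monic_basis_coef m biorth_basisr).
rewrite mul1r mulr1 /tau => ->; rewrite det_trig.
  by apply: eq_bigr => i _; rewrite mxE.
by apply/is_trig_mxP => i j i_lt_j; rewrite mxE biorth_offdiag // ltn_eqF.
Qed.

Lemma tau_ratio n :
  tau B n * tau B n.+2 / tau B n.+1 ^+ 2
  = B (phi n.+1) (psi n.+1) / B (phi n) (psi n).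
Proof.
rewrite !tau_biorth !big_ord_recr /= -!tau_biorth.
have tau_neq0 : tau B n != 0.
  by rewrite tau_biorth; apply/prodf_neq0 => k _; apply: biorth_diag_neq0.
by field; rewrite tau_neq0 biorth_diag_neq0.
Qed.

End Biorthogonal.

Lemma biorth_q_relation B (s : C) phi psi phis psis :
  bilinear_form B -> monic_biorthogonal B phi psi ->
  monic_biorthogonal (fun p q => B (('X - s%:P) * p) q) phis psis ->
  (forall n, (phi n).[s] != 0) ->
  forall n, ('X - s%:P) * phis n =
            phi n.+1 + (- ((phi n.+1).[s] / (phi n).[s])) *: phi n.
Proof.
move=> B_bilinear biorth biorths phi_s_neq0 n.
have [phis_size phis_monic] := biorth_basisl biorths n.
have [phi1_size phi1_monic] := biorth_basisl biorth n.+1.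
set x := ('X - s%:P) * phis n - phi n.+1.
have x_coll : x = x`_n *: phi n.
  apply: (biorth_collinear B_bilinear biorth).
    apply: size_sub_monic; rewrite ?monicMl ?monicXsubC //.
    by rewrite size_XsubCM ?phis_size // monic_neq0.
  have Bs_bilinear := bilinear_form_mulXsubCl s B_bilinear.
  move=> k k_lt_n; rewrite formBl // biorth_offdiag ?(gtn_eqF (leqW k_lt_n)) //.
  by rewrite (biorth_orthl Bs_bilinear biorths) ?subrr ?(biorth_basisr biorth k).1.
have x_s : x.[s] = - (phi n.+1).[s].
  by rewrite hornerD hornerN hornerM hornerXsubC subrr mul0r add0r.
have -> : - ((phi n.+1).[s] / (phi n).[s]) = x`_n.
  by apply: (mulIf (phi_s_neq0 n)); rewrite mulNr divfK // -x_s {1}x_coll hornerZ.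
by rewrite -x_coll subrKC.
Qed.

Lemma biorth_e_relation B (s : C) phi psi phid psid (qd : nat -> C) :
  bilinear_form B -> monic_biorthogonal B phi psi ->
  monic_biorthogonal (fun p q => B p (('X - s%:P) * q)) phid psid ->
  (forall n, ('X - s%:P) * psid n = psi n.+1 + qd n *: psi n) ->
  forall n, phi n.+1 =
    phid n.+1 + (B (phi n.+1) (psi n.+1) / (qd n * B (phi n) (psi n))) *: phid n.
Proof.
move=> B_bilinear biorth biorthd psid_rec n.
have Bd_bilinear := bilinear_form_mulXsubCr s B_bilinear.
have [phi_size phi_monic] := biorth_basisl biorth n.
have [phid_size phid_monic] := biorth_basisl biorthd n.
have [phi1_size phi1_monic] := biorth_basisl biorth n.+1.
have [phid1_size phid1_monic] := biorth_basisl biorthd n.+1.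
set x := phi n.+1 - phid n.+1.
have x_coll : x = x`_n *: phid n.
  apply: (biorth_collinear Bd_bilinear biorthd); first exact: size_sub_monic.
  move=> k k_lt_n /=; rewrite formBl //.
  rewrite (biorth_offdiag biorthd) ?(gtn_eqF (leqW k_lt_n)) //.
  have [psid_size /monic_neq0 psid_neq0] := biorth_basisr biorthd k.
  by rewrite (biorth_orthl B_bilinear biorth) ?subrr // size_XsubCM ?psid_size.
have x_pair : B x (('X - s%:P) * psid n) = B (phi n.+1) (psi n.+1).
  rewrite formBl // (biorth_offdiag biorthd) ?gtn_eqF // subr0.
  rewrite psid_rec formDr // formZr //.
  by rewrite (biorth_offdiag biorth (m := n.+1) (n := n)) ?gtn_eqF ?mulr0 ?addr0.
have phid_pair : B (phid n) (('X - s%:P) * psid n) = qd n * B (phi n) (psi n).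
  rewrite psid_rec formDr // formZr // (biorth_orthr B_bilinear biorth) ?phid_size //.
  rewrite -(subrK (phi n) (phid n)) formDl //.
  by rewrite (biorth_orthr B_bilinear biorth (n := n)) ?size_sub_monic ?add0r.
have -> : B (phi n.+1) (psi n.+1) / (qd n * B (phi n) (psi n)) = x`_n.
  rewrite -phid_pair -x_pair {1}x_coll formZl // mulfK //.
  exact: (biorth_diag_neq0 biorthd).
by rewrite -x_coll subrKC.
Qed.

Unset Implicit Arguments.

Theorem theorem2 (B : {poly C} -> {poly C} -> C) (sstar sdag : C)
  (phi psi phis psis phid psid : nat -> {poly C}) :
  bilinear_form B ->
  (forall n : nat, tau B n != 0) ->
  monic_biorthogonal B phi psi ->
  monic_biorthogonal (fun p q => B (('X - sstar%:P) * p) q) phis psis ->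
  monic_biorthogonal (fun p q => B p (('X - sdag%:P) * q)) phid psid ->
  (forall n : nat, (phi n).[sstar] != 0) ->
  (forall n : nat, (psi n).[sdag] != 0) ->
  let qs := fun n : nat => - ((phi n.+1).[sstar] / (phi n).[sstar]) in
  let qd := fun n : nat => - ((psi n.+1).[sdag] / (psi n).[sdag]) in
  let es := fun n : nat =>
    tau B n * tau B n.+2 / (qs n * tau B n.+1 ^+ 2) in
  let ed := fun n : nat =>
    tau B n * tau B n.+2 / (qd n * tau B n.+1 ^+ 2) in
  forall n : nat,
    ('X - sstar%:P) * phis n = phi n.+1 + qs n *: phi n /\
    phi n.+1 = phid n.+1 + ed n *: phid n /\
    ('X - sdag%:P) * psid n = psi n.+1 + qd n *: psi n /\
    psi n.+1 = psis n.+1 + es n *: psis n.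
Proof.
move=> B_bilinear _ biorth biorths biorthd phi_s_neq0 psi_s_neq0 qs qd es ed.
have Bt_bilinear := bilinear_form_tr B_bilinear.
have biorth_t := monic_biorthogonal_tr biorth.
have phis_rec := biorth_q_relation B_bilinear biorth biorths phi_s_neq0.
have psid_rec := biorth_q_relation Bt_bilinear biorth_t
  (monic_biorthogonal_tr biorthd) psi_s_neq0.
have e_coefE q k : B (phi k.+1) (psi k.+1) / (q * B (phi k) (psi k))
                   = tau B k * tau B k.+2 / (q * tau B k.+1 ^+ 2).
  by rewrite ![q * _]mulrC !(invfM _ q) !mulrA (tau_ratio B_bilinear biorth).
move=> n; split; first exact: phis_rec.
split; first by rewrite /ed -e_coefE; exact: biorth_e_relation biorthd psid_rec n.
split; first exact: psid_rec.
rewrite /es -e_coefE.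
exact: biorth_e_relation Bt_bilinear biorth_t (monic_biorthogonal_tr biorths)
  phis_rec n.
Qed.
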